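(* Let $B$ be a locally compact Hausdorff space, let $(X,r)$ be a $B$-space, let $(X',r')$ be a $B$-space with $X'$ Hausdorff and $r'$ proper, let $f\colon X\to X'$ be a $B$-map, and let $f'\colon\beta_BX\to X'$ be the unique continuous map with $f'\circ i=f$. Then $r'\circ f'=\beta_Br$.
   Context: A $B$-space is a space $Z$ with continuous $r\colon Z\to B$; a $B$-map is a continuous map commuting with the anchor maps. For a $B$-space $(X,r)$, $H_X\subseteq\mathrm{C_b}(X)$ is the closed linear span of products $g\cdot(h\circ r)$, $g\in\mathrm{C_b}(X)$, $h\in\mathrm C_0(B)$; $\beta_BX$ is the spectrum of the commutative C*-algebra $H_X$; $i\colon X\to\beta_BX$ sends $x$ to evaluation at $x$; $\beta_Br\colon\beta_BX\to B$ is the unique continuous map with $\beta_Br\circ i=r$ (it exists and is proper). The map $f'$ exists and is unique. *)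

From HB Require Import structures.
From mathcomp Require Import all_boot all_order all_algebra.
From mathcomp Require Import all_classical all_reals all_analysis.
From mathcomp Require Import complex.
Import numFieldTopology.Exports numFieldNormedType.Exports.
Import GRing.Theory Num.Theory.

Set Implicit Arguments.
Unset Strict Implicit.
Unset Printing Implicit Defensive.

Local Open Scope ring_scope.
Local Open Scope classical_set_scope.

Definition Cplx (R : realType) : numClosedFieldType := R[i].

Section BetaB.
Variable R : realType.
Local Notation C := (Cplx R).

Definition proper_map (S T : topologicalType) (f : S -> T) : Prop :=
  continuous f /\ forall K : set T, compact K -> compact (f @^-1` K).

Definition Cb (X : topologicalType) (g : X -> C) : Prop :=
  continuous g /\ exists M : R, forall x, `|g x| <= (M%:C)%C.

Definition C0 (B : topologicalType) (h : B -> C) : Prop :=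
  continuous h /\
  forall eps : R, 0 < eps -> compact [set b | (eps%:C)%C <= `|h b|].

Definition in_H (X B : topologicalType) (r : X -> B) (phi : X -> C) : Prop :=
  Cb phi /\
  forall eps : R, 0 < eps ->
    exists (n : nat) (c : nat -> C) (g : nat -> X -> C) (h : nat -> B -> C),
      (forall k, (k < n)%N -> Cb (g k) /\ C0 (h k)) /\
      forall x, `|phi x - \sum_(k < n) c k * (g k x * h k (r x))| <= (eps%:C)%C.

(* A functional is represented as a map on all of
   X -> C, normalised to vanish outside H_X, so that it is determined by its
   restriction to H_X. *)
Definition is_character (X B : topologicalType) (r : X -> B)
    (chi : {ptws (X -> C) -> C}) : Prop :=
  [/\ forall phi, ~ in_H r phi -> chi phi = 0,
      forall phi psi, in_H r phi -> in_H r psi ->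
        chi (phi \+ psi) = chi phi + chi psi,
      forall (a : C) phi, in_H r phi -> chi (fun x => a * phi x) = a * chi phi,
      forall phi psi, in_H r phi -> in_H r psi ->
        chi (phi \* psi) = chi phi * chi psi
    & exists phi, in_H r phi /\ chi phi != 0].

(* beta_B X: the spectrum of H_X with the weak-* topology, i.e. the subspace
   topology induced by the topology of pointwise convergence. *)
Definition betaB (X B : topologicalType) (r : X -> B) : topologicalType :=
  set_type (@is_character X B r).

(* is_i chi x  <->  chi = i x, i.e. chi is evaluation at x on H_X. *)
Definition is_i (X B : topologicalType) (r : X -> B) (chi : betaB r) (x : X)
  : Prop := forall phi, in_H r phi -> set_val chi phi = phi x.

End BetaB.

(* Both [r' \o f'] and [betaBr] are continuous maps into the Hausdorff space
   [B] that agree on the evaluation characters, so it suffices that these are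
   dense in the spectrum.  Given a character
   [chi], finitely many [s_k] in [H_X] and [eps > 0], take [u] with [chi u = 1]
   and [g = \sum_k |u (s_k - chi s_k)|^2], so that [chi g = 0].  Some [x] has
   [g x] small and [|u x| > 1/2]: otherwise [a = u (1 - g / M)^n] would satisfy
   [chi a = 1] and [|a| <= 1/2], whereas then [c = \sum_(j >= 1) a^j] lies in
   [H_X] and [c = a + a c] forces [chi c = 1 + chi c].  Evaluation at such an
   [x] is a character within [eps] of [chi] on every [s_k]. *)

From HB Require Import structures.
From mathcomp Require Import all_boot all_order all_algebra.
From mathcomp Require Import all_classical all_reals all_analysis.
From mathcomp Require Import complex ring lra.
Import numFieldTopology.Exports numFieldNormedType.Exports.
Import Order.TTheory GRing.Theory Num.Theory Normc.
Local Open Scope classical_set_scope.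
Local Open Scope ring_scope.

Lemma eq_continuous_dense {T U : topologicalType} (S : set T) (f g : T -> U) :
  hausdorff_space U -> dense S -> continuous f -> continuous g ->
  (forall t, S t -> f t = g t) -> f = g.
Proof.
move=> hU dS cf cg fg; apply/funext => t; apply: hU => P Q Pf Qg.
have Nf : nbhs t (f @^-1` P) := cf t P Pf.
have Ng : nbhs t (g @^-1` Q) := cg t Q Qg.
have : nbhs t (f @^-1` P `&` g @^-1` Q) by exact: filterI.
rewrite nbhsE => -[W [oW Wt] WPQ].
have [s [Ws Ss]] := dS W (ex_intro _ t Wt) oW.
have [Pfs Qgs] := WPQ s Ws; exists (f s); split => //.
by rewrite fg.
Qed.

Section ComplexNorm.
Context {R : realType}.
Local Notation C := (Cplx R).
Implicit Types (z : C) (a : R).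

Lemma normr_normc z : `|z| = (normc z)%:C%C.
Proof. by case: z. Qed.

Lemma normc_ge0 z : 0 <= normc z.
Proof. by case: z => a b; exact: sqrtr_ge0. Qed.

Lemma lec_normc z a : (`|z| <= a%:C%C) = (normc z <= a).
Proof. by rewrite normr_normc lecR. Qed.

Lemma ltc_normc z a : (`|z| < a%:C%C) = (normc z < a).
Proof. by rewrite normr_normc ltcR. Qed.

Lemma normc_lec z a : (a%:C%C <= `|z|) = (a <= normc z).
Proof. by rewrite normr_normc lecR. Qed.

Lemma normc_real a : normc a%:C%C = `|a|.
Proof. by rewrite /= expr0n /= addr0 sqrtr_sqr. Qed.

Lemma normc_conj z : normc z^* = normc z.
Proof. by apply: (@complexI R); rewrite -!normr_normc normcJ. Qed.

Lemma mulcJ_normc z : z * z^* = (normc z ^+ 2)%:C%C.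
Proof. by rewrite -sqr_normc normr_normc rmorphXn. Qed.

Lemma continuous_conjc : continuous (fun z : C => z^*).
Proof.
move=> z; apply/(@cvgrPdist_lt _ _ _ (nbhs z) (nbhs_filter z)) => e e0.
have := @cvgr_dist_lt _ _ _ (nbhs z) (nbhs_filter z) id z cvg_id e e0.
by apply: filterS => w; rewrite /= -rmorphB normcJ.
Qed.

Lemma closed_normc_ge a : closed [set z : C | a%:C%C <= `|z|].
Proof.
have -> : [set z : C | a%:C%C <= `|z|] = ~` ball (0 : C) a%:C%C.
  apply/funext => z /=; apply/propext.
  by rewrite /ball /= sub0r normrN normc_lec ltc_normc leNgt; split => /negP.
exact/open_closedC/ball_open.
Qed.

End ComplexNorm.

Section BoundedContinuous.
Context {R : realType}.
Variable T : topologicalType.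
Local Notation C := (Cplx R).
Implicit Types phi psi : T -> C.

Lemma CbP phi :
  Cb phi <-> continuous phi /\ exists2 M, 0 <= M & forall x, normc (phi x) <= M.
Proof.
split=> [[cphi [M hM]]|[cphi [M M0 hM]]]; split => //.
  exists `|M| => // x; have := hM x; rewrite lec_normc => /le_trans; apply.
  exact: ler_norm.
by exists M => x; rewrite lec_normc.
Qed.

Lemma CbD phi psi : Cb phi -> Cb psi -> Cb (phi \+ psi).
Proof.
move=> /CbP[cphi [M1 M10 b1]] /CbP[cpsi [M2 M20 b2]]; apply/CbP; split.
  by move=> x; apply: continuousD; [exact: cphi|exact: cpsi].
exists (M1 + M2); first exact: addr_ge0.
by move=> x /=; apply: le_trans (le_normcD _ _) _; exact: lerD.
Qed.

Lemma CbM phi psi : Cb phi -> Cb psi -> Cb (phi \* psi).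
Proof.
move=> /CbP[cphi [M1 M10 b1]] /CbP[cpsi [M2 M20 b2]]; apply/CbP; split.
  by move=> x; apply: continuousM; [exact: cphi|exact: cpsi].
exists (M1 * M2); first exact: mulr_ge0.
by move=> x /=; rewrite normcM; apply: ler_pM => //; exact: normc_ge0.
Qed.

Lemma Cb_cst (a : C) : Cb (fun _ : T => a).
Proof.
apply/CbP; split; first by move=> x; exact: cvg_cst.
by exists (normc a); [exact: normc_ge0|].
Qed.

Lemma CbZ (a : C) phi : Cb phi -> Cb (fun x => a * phi x).
Proof. exact/CbM/Cb_cst. Qed.

Lemma CbJ phi : Cb phi -> Cb (fun x => (phi x)^*).
Proof.
move=> /CbP[cphi [M M0 b]]; apply/CbP; split.
  by move=> x; apply: continuous_comp; [exact: cphi|exact: continuous_conjc].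
by exists M => // x; rewrite normc_conj.
Qed.

End BoundedContinuous.

Section VanishingAtInfinity.
Context {R : realType}.
Variable B : topologicalType.
Local Notation C := (Cplx R).
Implicit Types h : B -> C.

Lemma C0J h : C0 h -> C0 (fun b => (h b)^*).
Proof.
move=> [ch hc]; split.
  by move=> b; apply: continuous_comp; [exact: ch|exact: continuous_conjc].
by move=> e e0; under eq_set do rewrite normcJ; exact: hc.
Qed.

Lemma C0M h h' : C0 h -> C0 h' -> C0 (h \* h').
Proof.
move=> [ch hc] [ch' hc']; have chh' : continuous (h \* h').
  by move=> b; apply: continuousM; [exact: ch|exact: ch'].
split => // e e0.
apply: (subclosed_compact _ (compactU (hc e e0) (hc' 1 ltr01))).
  by have := proj1 (continuous_closedP _) chh' _ (closed_normc_ge e).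
move=> b /=; rewrite !normc_lec normcM => hb.
have := normc_ge0 (h b); have := normc_ge0 (h' b).
case: (lerP e (normc (h b))) => [|hbe]; [by left|right; nra].
Qed.

End VanishingAtInfinity.

Section Span.
Context {R : realType} {X B : topologicalType} {r : X -> B}.
Local Notation C := (Cplx R).
Implicit Types phi psi : X -> C.

(* Indexing by an arbitrary finite type, rather than by ['I_n] as in [in_H],
   turns the span of a product into a sum over [I * J]. *)
Definition in_span psi := exists (I : finType) (c : I -> C) (g : I -> X -> C)
    (h : I -> B -> C), (forall i, Cb (g i) /\ C0 (h i)) /\
  forall x, psi x = \sum_i c i * (g i x * h i (r x)).

Lemma in_span0 : in_span (fun _ => 0).
Proof.
exists void, (fun _ => 0), (fun _ _ => 0), (fun _ _ => 0); split; first by case.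
by move=> x; rewrite big_pred0 //; case.
Qed.

Lemma in_spanD psi1 psi2 : in_span psi1 -> in_span psi2 -> in_span (psi1 \+ psi2).
Proof.
move=> [I [c [g [h [gh E1]]]]] [J [c' [g' [h' [gh' E2]]]]].
exists (I + J)%type, (fun s => match s with inl i => c i | inr j => c' j end).
exists (fun s => match s with inl i => g i | inr j => g' j end).
exists (fun s => match s with inl i => h i | inr j => h' j end).
split; first by case.
by move=> x; rewrite big_sumType /= E1 E2.
Qed.

Lemma in_spanZ (a : C) psi : in_span psi -> in_span (fun x => a * psi x).
Proof.
move=> [I [c [g [h [gh E]]]]]; exists I, (fun i => a * c i), g, h; split => //.
by move=> x; rewrite E big_distrr /=; apply: eq_bigr => i _; rewrite mulrA.
Qed.

Lemma in_spanM psi1 psi2 : in_span psi1 -> in_span psi2 -> in_span (psi1 \* psi2).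
Proof.
move=> [I [c [g [h [gh E1]]]]] [J [c' [g' [h' [gh' E2]]]]].
exists (I * J)%type, (fun p => c p.1 * c' p.2).
exists (fun p => g p.1 \* g' p.2), (fun p => h p.1 \* h' p.2); split.
  move=> [i j]; have [gi hi] := gh i; have [gj hj] := gh' j.
  by split; [exact: CbM|exact: C0M].
move=> x; rewrite /= E1 E2 big_distrl /=.
under eq_bigr do rewrite big_distrr /=.
rewrite pair_big /=; apply: eq_bigr => p _.
by rewrite mulrACA !mulrA -!mulrA (mulrCA (h p.1 (r x))) !mulrA.
Qed.

Lemma in_spanJ psi : in_span psi -> in_span (fun x => (psi x)^*).
Proof.
move=> [I [c [g [h [gh E]]]]].
exists I, (fun i => (c i)^*), (fun i x => (g i x)^*), (fun i b => (h i b)^*).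
split; first by move=> i; have [gi hi] := gh i; split; [exact: CbJ|exact: C0J].
by move=> x; rewrite E rmorph_sum; apply: eq_bigr => i _; rewrite !rmorphM.
Qed.

Definition uniformly_approx_by (P : (X -> C) -> Prop) phi :=
  forall eps : R, 0 < eps ->
    exists2 psi, P psi & forall x, normc (phi x - psi x) <= eps.

Lemma in_HP phi : in_H r phi <-> Cb phi /\ uniformly_approx_by in_span phi.
Proof.
split=> -[cphi approx]; split => // e e0.
  have [n [c [g [h [gh close]]]]] := approx e e0.
  exists (fun x => \sum_(k < n) c k * (g k x * h k (r x))); last first.
    by move=> x; rewrite -lec_normc.
  exists 'I_n, (fun k : 'I_n => c k), (fun k : 'I_n => g k), (fun k : 'I_n => h k).
  by split => // k; exact: gh.
have [psi [I [c [g [h [gh E]]]]] close] := approx e e0.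
pose ins k : option 'I_#|I| := insub k.
exists #|I|, (fun k => if ins k is Some o then c (enum_val o) else 0).
exists (fun k => if ins k is Some o then g (enum_val o) else fun _ => 0).
exists (fun k => if ins k is Some o then h (enum_val o) else fun _ => 0).
split; first by move=> k kn; rewrite /ins insubT /=; exact: gh.
move=> x; rewrite lec_normc; apply: le_trans (close x); rewrite le_eqVlt; apply/orP; left; apply/eqP.
congr (normc (_ - _)); rewrite E [RHS](big_enum_val (A := predT)).
by apply: eq_bigr => k _; rewrite /ins valK.
Qed.

Lemma in_H_closed phi : Cb phi -> uniformly_approx_by (in_H r) phi -> in_H r phi.
Proof.
move=> cphi approx; apply/in_HP; split => // e e0.
have e20 : 0 < e / 2 by rewrite divr_gt0.
have [psi /in_HP[_ approx_psi] close] := approx _ e20.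
have [p span_p close_p] := approx_psi _ e20; exists p => // x.
rewrite -(subrKA (psi x)) (splitr e).
by apply: le_trans (le_normcD _ _) _; exact: lerD.
Qed.

Lemma in_H0 : in_H r (fun _ => 0 : C).
Proof.
apply/in_HP; split; first exact: Cb_cst.
by move=> e e0; exists (fun _ => 0) => [|x]; rewrite ?subrr ?normc0 ?ltW //; exact: in_span0.
Qed.

Lemma in_HD phi psi : in_H r phi -> in_H r psi -> in_H r (phi \+ psi).
Proof.
move=> /in_HP[cphi aphi] /in_HP[cpsi apsi]; apply/in_HP; split; first exact: CbD.
move=> e e0; have e20 : 0 < e / 2 by rewrite divr_gt0.
have [p span_p close_p] := aphi _ e20; have [q span_q close_q] := apsi _ e20.
exists (p \+ q); first exact: in_spanD.
move=> x /=; rewrite opprD addrACA (splitr e).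
by apply: le_trans (le_normcD _ _) _; exact: lerD.
Qed.

Lemma in_HZ (a : C) phi : in_H r phi -> in_H r (fun x => a * phi x).
Proof.
move=> /in_HP[cphi aphi]; apply/in_HP; split; first exact: CbZ.
move=> e e0; have a0 : 0 < normc a + 1 by rewrite ltr_wpDl ?normc_ge0.
have [p span_p close_p] := aphi (e / (normc a + 1)) (divr_gt0 e0 a0).
exists (fun x => a * p x); first exact: in_spanZ.
move=> x; rewrite -mulrBr normcM.
apply: le_trans (ler_wpM2l (normc_ge0 _) (close_p x)) _.
by rewrite mulrCA ger_pMr // ler_pdivrMr // mul1r lerDl.
Qed.

Lemma in_HJ phi : in_H r phi -> in_H r (fun x => (phi x)^*).
Proof.
move=> /in_HP[cphi aphi]; apply/in_HP; split; first exact: CbJ.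
move=> e e0; have [p span_p close_p] := aphi _ e0.
exists (fun x => (p x)^*); first exact: in_spanJ.
by move=> x; rewrite -rmorphB normc_conj.
Qed.

Lemma in_HM phi psi : in_H r phi -> in_H r psi -> in_H r (phi \* psi).
Proof.
move=> /in_HP[cphi aphi] /in_HP[cpsi apsi]; apply/in_HP; split; first exact: CbM.
have /CbP[_ [M1 M10 b1]] := cphi; have /CbP[_ [M2 M20 b2]] := cpsi.
move=> e e0; have M0 : 0 < M1 + M2 + 1 by rewrite ltr_wpDl // addr_ge0.
pose e' := Num.min 1 (e / (M1 + M2 + 1)).
have e'0 : 0 < e' by rewrite lt_min ltr01 divr_gt0.
have e'1 : e' <= 1 by rewrite ge_min lexx.
have e'e : e' * (M1 + M2 + 1) <= e by rewrite -ler_pdivlMr // ge_min lexx orbT.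
have [p span_p close_p] := aphi _ e'0; have [q span_q close_q] := apsi _ e'0.
exists (p \* q); first exact: in_spanM.
move=> x /=.
have -> : phi x * psi x - p x * q x = phi x * (psi x - q x) + (phi x - p x) * q x.
  by rewrite mulrBr mulrBl addrA subrK.
have bq : normc (q x) <= M2 + 1.
  rewrite -[q x](subKr (psi x)); apply: le_trans (le_normcD _ _) _.
  by rewrite normcN; apply: lerD; [exact: b2|exact: le_trans (close_q x) e'1].
apply: le_trans (le_normcD _ _) _; rewrite !normcM; apply: le_trans e'e.
rewrite -addrA mulrDr [e' * M1]mulrC.
by apply: lerD; apply: ler_pM => //; exact: normc_ge0.
Qed.

End Span.

Lemma exists_expr_le {R : archiRealFieldType} (q e : R) :
  0 <= q -> q < 1 -> 0 < e -> exists n, q ^+ n <= e.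
Proof.
move=> q0 q1 e0.
have q_to0 : GRing.exp q @ \oo --> 0 by apply: cvg_expr; rewrite ger0_norm.
have [n /ltW] := filter_ex (cvgr_dist_lt _ _ q_to0 _ e0).
by rewrite sub0r normrN ger0_norm ?exprn_ge0 //; exists n.
Qed.

Section Character.
Context {R : realType}.
Local Notation C := (Cplx R).
Context {X B : topologicalType} {r : X -> B} {chi : {ptws (X -> C) -> C}}.
Hypothesis chiP : is_character r chi.
Implicit Types phi psi : X -> C.

Lemma character_out phi : ~ in_H r phi -> chi phi = 0.
Proof. by case: chiP => out _ _ _ _; exact: out. Qed.

Lemma characterD phi psi :
  in_H r phi -> in_H r psi -> chi (phi \+ psi) = chi phi + chi psi.
Proof. by case: chiP => _ add _ _ _; exact: add. Qed.

Lemma characterZ (a : C) phi : in_H r phi -> chi (fun x => a * phi x) = a * chi phi.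
Proof. by case: chiP => _ _ scale _ _; exact: scale. Qed.

Lemma characterM phi psi :
  in_H r phi -> in_H r psi -> chi (phi \* psi) = chi phi * chi psi.
Proof. by case: chiP => _ _ _ mul _; exact: mul. Qed.

Lemma character0 : chi (fun _ => 0) = 0.
Proof.
by have := characterZ 0 _ (in_H0 (r := r)); rewrite !mul0r.
Qed.

Lemma character_unit : exists2 u, in_H r u & chi u = 1.
Proof.
case: chiP => _ _ _ _ [phi [Hphi chi_phi]].
exists (fun x => (chi phi)^-1 * phi x); first exact: in_HZ.
by rewrite characterZ // mulVf.
Qed.

Lemma character_eq1_sup_gt_half a :
  in_H r a -> chi a = 1 -> exists x, 2^-1 < normc (a x).
Proof.
move=> Ha ca; apply: contrapT => /forallNP not_large.
have small x : normc (a x) <= 2^-1 by rewrite leNgt; apply/negP; exact: not_large.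
have half_ge0 : (0 : R) <= 2^-1 by rewrite invr_ge0 ler0n.
have half_lt1 : (2^-1 : R) < 1 by rewrite invf_lt1 // ltr1n.
have a1 x : 1 - a x != 0.
  by rewrite subr_eq0; apply: contraTneq (small x) => <-; rewrite normc1 -ltNge.
pose c x := a x / (1 - a x).
have cE x : c x = a x + a x * c x by rewrite /c; field; exact: a1.
have c_le1 x : normc (c x) <= 1.
  have := le_normcD (a x) (a x * c x); rewrite -cE [normc (a x * _)]normcM.
  have := small x; have := normc_ge0 (c x); have := normc_ge0 (a x); nra.
have Cb_c : Cb c.
  apply/CbP; split.
    have /in_HP[/CbP[cont_a _] _] := Ha.
    move=> x; apply: (@continuousM _ _ a (fun x => (1 - a x)^-1)); first exact: cont_a.
    apply: (@continuousV _ _ (fun x => 1 - a x)); first exact: a1.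
    exact: (@continuousB _ _ _ (fun=> 1 : C) a x
              (@cst_continuous _ _ (1 : C) x) (cont_a x)).
  by exists 1.
pose fix s n := if n is n'.+1 then a \+ a \* s n' else a.
have in_H_s n : in_H r (s n).
  by elim: n => //= n IH; apply: in_HD => //; exact: in_HM.
have s_close n x : normc (c x - s n x) <= 2^-1 ^+ n.+1.
  elim: n => [|n IH] /=.
    rewrite expr1 {1}cE addrC addKr normcM -[leRHS]mulr1.
    by apply: ler_pM; rewrite ?normc_ge0.
  rewrite {1}cE opprD addrACA subrr add0r -mulrBr normcM exprS.
  by apply: ler_pM; rewrite ?normc_ge0.
have in_H_c : in_H r c.
  apply: in_H_closed => // e e0.
  have [n half_n] := exists_expr_le _ _ half_ge0 half_lt1 e0.
  exists (s n) => // x; apply: le_trans (s_close n x) _; apply: le_trans half_n.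
  by rewrite exprS ler_piMl ?exprn_ge0 // ltW.
have := characterD _ _ Ha (in_HM _ _ Ha in_H_c).
have -> : a \+ a \* c = c by apply/funext => x; rewrite [RHS]cE.
rewrite characterM // ca mul1r.
by move/(congr1 (fun z => z - chi c)); rewrite subrr addrK => /esym/eqP; rewrite oner_eq0.
Qed.

Lemma character_sum_sq n (d : nat -> X -> C) :
  (forall k, (k < n)%N -> in_H r (d k) /\ chi (d k) = 0) ->
  exists g (gr : X -> R), [/\ in_H r g, chi g = 0, forall x, g x = (gr x)%:C%C,
    forall x, 0 <= gr x & forall k x, (k < n)%N -> normc (d k x) ^+ 2 <= gr x].
Proof.
elim: n => [_|n IH dP].
  exists (fun=> 0 : C), (fun=> 0); split => //; [exact: in_H0|exact: character0].
have [//|g [gr [Hg cg gE gr0 gr_ge]]] := IH; first by move=> k kn; apply: dP; exact: ltnW.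
have [Hdn cdn] := dP n (ltnSn n); have HdnJ := in_HJ _ Hdn.
exists (g \+ d n \* (fun x => (d n x)^*)), (fun x => gr x + normc (d n x) ^+ 2).
split; first by apply: in_HD => //; exact: in_HM.
- by rewrite characterD ?characterM //; [rewrite cg cdn mul0r addr0|exact: in_HM].
- by move=> x /=; rewrite gE mulcJ_normc rmorphD.
- by move=> x; rewrite addr_ge0 ?exprn_ge0 ?normc_ge0.
move=> k x; rewrite ltnS leq_eqVlt => /orP[/eqP->|kn]; first by rewrite lerDr.
by apply: le_trans (gr_ge k x kn) _; rewrite lerDl exprn_ge0 ?normc_ge0.
Qed.

Lemma character_concentrates u g (gr : X -> R) rho :
  in_H r u -> chi u = 1 -> in_H r g -> chi g = 0 ->
  (forall x, g x = (gr x)%:C%C) -> (forall x, 0 <= gr x) -> 0 < rho ->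
  exists x, gr x < rho /\ 2^-1 < normc (u x).
Proof.
move=> Hu cu Hg cg gE gr0 rho0; apply: contrapT => /forallNP no_x.
have small x : gr x < rho -> normc (u x) <= 2^-1.
  by move=> gx; rewrite leNgt; apply/negP => ux; exact: no_x x (conj gx ux).
have /in_HP[/CbP[_ [Mu Mu0 bu]] _] := Hu.
have /in_HP[/CbP[_ [Mg Mg0 bg]] _] := Hg.
pose M := Mg + rho.
have M0 : 0 < M by rewrite /M; lra.
have grM x : gr x < M.
  by have := bg x; rewrite gE normc_real ger0_norm // /M; lra.
have damped j : exists2 a, in_H r a &
    chi a = 1 /\ forall x, a x = u x * ((1 - gr x / M) ^+ j)%:C%C.
  elim: j => [|j [a Ha [ca aE]]]; first by exists u => //; split => // x; rewrite mulr1.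
  have Hga := in_HM _ _ Hg Ha; have HMga := in_HZ (- (M^-1)%:C%C) _ Hga.
  exists (a \+ (fun x => - (M^-1)%:C%C * (g \* a) x)); first exact: in_HD.
  split; first by rewrite characterD // characterZ // characterM // cg ca !mul0r mulr0 addr0.
  move=> x /=; rewrite aE gE exprSr rmorphM rmorphB rmorph1 rmorphM /=; ring.
pose q := 1 - rho / M.
have q0 : 0 <= q by rewrite subr_ge0 ler_pdivrMr // mul1r lerDr.
have q1 : q < 1 by have := divr_gt0 rho0 M0; rewrite /q; lra.
have half_gt0 : (0 : R) < 2^-1 by rewrite invr_gt0 ltr0n.
have Mu1 : 0 < Mu + 1 by lra.
have [n qn] := exists_expr_le _ _ q0 q1 (divr_gt0 half_gt0 Mu1).
have {}qn : q ^+ n * (Mu + 1) <= 2^-1 by rewrite -ler_pdivlMr.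
have [a Ha [ca aE]] := damped n.
have [x] := character_eq1_sup_gt_half _ Ha ca; apply/negP; rewrite -leNgt.
have w0 : 0 <= 1 - gr x / M by rewrite subr_ge0 ler_pdivrMr // mul1r ltW.
have w1 : 1 - gr x / M <= 1 by rewrite lerBlDr lerDl divr_ge0 // ltW.
rewrite aE normcM normc_real ger0_norm ?exprn_ge0 //.
have := normc_ge0 (u x); have := exprn_ge0 n w0.
case: (ltP (gr x) rho) => [/small ux|rho_gr].
  by have := exprn_ile1 n w0 w1; nra.
have wq : 1 - gr x / M <= q by rewrite lerD2l lerN2 ler_pM2r // invr_gt0.
have := lerXn2r n (w0 : _ \is Num.nneg) (q0 : _ \is Num.nneg); rewrite wq.
have := bu x; nra.
Qed.

Lemma evaluation_approx n (s : nat -> X -> C) eps :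
  (forall k, (k < n)%N -> in_H r (s k)) -> 0 < eps ->
  exists x, (exists2 phi : X -> C, in_H r phi & phi x != 0) /\
    forall k, (k < n)%N -> normc (s k x - chi (s k)) < eps.
Proof.
move=> Hs eps0; have [u Hu cu] := character_unit.
pose d k := u \* s k \+ (fun x => - chi (s k) * u x).
have dP k : (k < n)%N -> in_H r (d k) /\ chi (d k) = 0.
  move=> kn; have Hus := in_HM _ _ Hu (Hs k kn).
  have Hcu := in_HZ (- chi (s k)) _ Hu.
  split; first exact: in_HD.
  rewrite (characterD _ _ Hus Hcu) (characterM _ _ Hu (Hs k kn)) (characterZ _ _ Hu).
  by rewrite cu mul1r mulr1 addrN.
have [g [gr [Hg cg gE gr0 dg]]] := character_sum_sq _ _ dP.
have eps2 : 0 < (eps / 2) ^+ 2 by rewrite exprn_gt0 // divr_gt0.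
have [x [gx ux]] := character_concentrates _ _ _ _ Hu cu Hg cg gE gr0 eps2.
exists x; split.
  by exists u => //; apply: contraTneq ux => ->; rewrite normc0 -leNgt invr_ge0 ler0n.
move=> k kn; have := dg k x kn.
have -> : d k x = u x * (s k x - chi (s k)) by rewrite /d /=; ring.
rewrite normcM; have := normc_ge0 (s k x - chi (s k)).
set t := normc (_ - _); set v := normc (u x) => t0 vt.
have v0 : 0 <= v by exact: normc_ge0.
have {}vt : v * t < eps / 2.
  have := le_lt_trans vt gx; have := mulr_ge0 v0 t0; nra.
have : 2^-1 * t <= v * t by rewrite ler_wpM2r // ltW.
lra.
Qed.

End Character.

Section Evaluation.
Context {R : realType}.
Local Notation C := (Cplx R).
Context {X B : topologicalType} (r : X -> B).

Definition evaluation (x : X) : {ptws (X -> C) -> C} :=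
  fun phi => if pselect (in_H r phi) then phi x else 0.

Lemma evaluationE x (phi : X -> C) : in_H r phi -> evaluation x phi = phi x.
Proof. by rewrite /evaluation; case: pselect. Qed.

Lemma evaluation_character x (phi : X -> C) :
  in_H r phi -> phi x != 0 -> is_character r (evaluation x).
Proof.
move=> Hphi phix; split.
- by move=> psi notH; rewrite /evaluation; case: pselect.
- by move=> psi1 psi2 H1 H2; rewrite !evaluationE //; exact: in_HD.
- by move=> a psi Hpsi; rewrite !evaluationE //; exact: in_HZ.
- by move=> psi1 psi2 H1 H2; rewrite !evaluationE //; exact: in_HM.
- by exists phi; rewrite evaluationE.
Qed.

Lemma evaluation_near chi n (s : nat -> X -> C) eps :
  is_character r chi -> 0 < eps ->
  exists x, is_character r (evaluation x) /\
    forall k, (k < n)%N -> normc (evaluation x (s k) - chi (s k)) < eps.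
Proof.
move=> chiP eps0.
(* Outside [H_X] both [evaluation x] and [chi] vanish, so such [s k] can be
   replaced by [0]. *)
pose s' k := if pselect (in_H r (s k)) then s k else fun=> 0.
have Hs' k : (k < n)%N -> in_H r (s' k).
  by move=> _; rewrite /s'; destruct (pselect (in_H r (s k))) => //; exact: in_H0.
have [x [[phi Hphi phix] close]] := evaluation_approx chiP _ _ _ Hs' eps0.
exists x; split; first exact: evaluation_character Hphi phix.
move=> k kn; have := close k kn; rewrite /s' /evaluation; case: pselect => // notH _.
by rewrite (character_out chiP _ notH) subrr normc0.
Qed.

Lemma character_in_closure_evaluations chi : is_character r chi ->
  closure [set evaluation x | x in [set x | is_character r (evaluation x)]] chi.
Proof.
move=> chiP A A_chi.
pose D := [set i : nat * (nat -> X -> C) * R | 0 < i.2].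
pose E (i : nat * (nat -> X -> C) * R) := [set psi : {ptws (X -> C) -> C} |
  forall k, (k < i.1.1)%N -> normc (psi (i.1.2 k) - chi (i.1.2 k)) < i.2].
(* The sets [E i] generate a filter converging pointwise to [chi], so [A]
   contains one of them. *)
have E_filter : Filter (filter_from D E).
  apply: filter_from_filter; first by exists (0%N, (fun _ _ => 0), 1); rewrite /D /=.
  move=> [[n1 s1] e1] [[n2 s2] e2]; rewrite /D /= => e10 e20.
  exists ((n1 + n2)%N, (fun k => if (k < n1)%N then s1 k else s2 (k - n1)%N),
          Num.min e1 e2); first by rewrite /D /= lt_min e10 e20.
  move=> psi close; split => k /= kn.
    by have /= := close k (ltn_addr _ kn); rewrite kn lt_min => /andP[].
  have /= := close (n1 + k)%N; rewrite ltn_add2l addKn.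
  rewrite [(n1 + k < n1)%N]ltnNge leq_addr /=.
  by move=> /(_ kn); rewrite lt_min => /andP[].
have E_cvg : filter_from D E --> chi.
  apply/(@pointwise_cvgP {ptws X -> C} C _ chi E_filter).
  move=> phi N /nbhs_ballP[e e0 eN].
  have ne0 : 0 < normc e by rewrite -ltcR -normr_normc gtr0_norm.
  exists (1%N, (fun=> phi), normc e) => // psi /(_ 0%N isT) /= close.
  by apply: eN; rewrite /ball /= distrC -[e]gtr0_norm // normr_normc ltcR.
have [[[n s] e] /= e0 EA] := E_cvg A A_chi.
have [x [xP close]] := evaluation_near _ n s _ chiP e0.
by exists (evaluation x); split; [exists x|exact: EA].
Qed.

Lemma dense_evaluations : dense [set chi : betaB R r | exists x, is_i chi x].
Proof.
move=> W [chi Wchi] [A oA eA].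
have chiP : is_character r (set_val chi) by have := set_valP chi.
have A_chi : nbhs (set_val chi) A.
  by apply: open_nbhs_nbhs; split => //; rewrite -eA in Wchi.
have [_ [[x /= xP <-] Ax]] := character_in_closure_evaluations _ chiP _ A_chi.
exists (SigSub (mem_set xP) : betaB R r); split; first by rewrite -eA.
by exists x => phi; exact: evaluationE.
Qed.

End Evaluation.

Theorem proposition4p10 (R : realType) (B X X' : topologicalType)
    (r : X -> B) (r' : X' -> B) (f : X -> X') :
  locally_compact [set: B] -> hausdorff_space B ->
  continuous r ->
  hausdorff_space X' -> proper_map r' ->
  continuous f -> r' \o f = r ->
  forall f' : betaB R r -> X',
    continuous f' -> (forall chi x, is_i chi x -> f' chi = f x) ->
  forall betaBr : betaB R r -> B,
    continuous betaBr -> (forall chi x, is_i chi x -> betaBr chi = r x) ->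
  r' \o f' = betaBr.
Proof.
move=> _ hB _ _ [cr' _] _ rf f' cf' f'E betaBr cbetaBr betaBrE.
apply: (eq_continuous_dense _ _ _ hB (dense_evaluations r)) => //.
  by move=> chi; apply: continuous_comp; [exact: cf'|exact: cr'].
by move=> chi [x chix]; rewrite /= (f'E _ _ chix) (betaBrE _ _ chix) -rf.
Qed.
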